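(* Let $n\ge1$ and $A\in\mathbb{R}^{n\times n}$. (i) If $A=B+C$ for some weakly algebraically independent $B,C\in\mathbb{R}^{n\times n}$, then $A$ is transcendental. (ii) If $A$ is not weakly algebraic, then there exist weakly algebraically independent $B,C\in\mathscr{L}_{n,n}$ with $B+C=A$.
   Context: Polynomials in several non-commuting variables with integer coefficients ($\mathbb{Z}\langle X_0,\ldots,X_\ell\rangle$) are evaluated at real $n\times n$ matrices by substitution (constant term times $I_n$). $A$ is algebraic if $P(A)=\mathbf{0}$ for some nonzero $P\in\mathbb{Z}[X]$, and transcendental otherwise. $A$ is weakly algebraic if there exist an integer $\ell\ge0$ and $P\in\mathbb{Z}\langle X_0,\ldots,X_\ell\rangle$ such that $P(A,B_1,\ldots,B_\ell)=\mathbf{0}$ for all $B_1,\ldots,B_\ell\in\mathbb{R}^{n\times n}$, but $P(C_0,\ldots,C_\ell)\ne\mathbf{0}$ for some $C_0,\ldots,C_\ell\in\mathbb{R}^{n\times n}$. $B,C$ are weakly algebraically independent if every $P\in\mathbb{Z}\langle X,Y\rangle$ with $P(B,C)=\mathbf{0}$ satisfies $P(C_0,C_1)=\mathbf{0}$ for all $C_0,C_1\in\mathbb{R}^{n\times n}$. $\Vert\cdot\Vert$ is the supremum norm; a real $m\times n$ matrix $A$ is a Liouville matrix if $A\mathbf{q}-\mathbf{p}\neq\mathbf{0}$ for all nonzero $(\mathbf{q},\mathbf{p})\in\mathbb{Z}^n\times\mathbb{Z}^m$ and for every $N$ there exist $\mathbf{p}\in\mathbb{Z}^m$, $\mathbf{q}\in\mathbb{Z}^n\setminus\{\mathbf{0}\}$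 with $\Vert A\mathbf{q}-\mathbf{p}\Vert<\Vert\mathbf{q}\Vert^{-N}$; $\mathscr{L}_{m,n}$ is the set of these. *)

From HB Require Import structures.
From mathcomp Require Import all_boot all_order all_algebra.
From mathcomp Require Import reals.
Set Implicit Arguments. Unset Strict Implicit. Unset Printing Implicit Defensive.
Import Order.TTheory GRing.Theory Num.Theory.
Local Open Scope ring_scope.

Inductive ncpoly (k : nat) : Type :=
| NCconst of int
| NCvar of 'I_k
| NCopp of ncpoly k
| NCadd of ncpoly k & ncpoly k
| NCmul of ncpoly k & ncpoly k.

Fixpoint nceval (R : realType) (n k : nat) (X : 'I_k -> 'M[R]_n.+1)
  (P : ncpoly k) : 'M[R]_n.+1 :=
  match P with
  | NCconst c => (c%:~R : R)%:M
  | NCvar i => X i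
  | NCopp p => - nceval X p
  | NCadd p q => nceval X p + nceval X q
  | NCmul p q => nceval X p *m nceval X q
  end.

Definition zpoly_eval (R : realType) (n : nat) (p : {poly int}) (A : 'M[R]_n.+1)
  : 'M[R]_n.+1 :=
  \sum_(i < size p) ((p`_i)%:~R : R) *: (A ^+ i).

Definition algebraic (R : realType) (n : nat) (A : 'M[R]_n.+1) : Prop :=
  exists p : {poly int}, p != 0 /\ zpoly_eval p A = 0.

Definition transcendental (R : realType) (n : nat) (A : 'M[R]_n.+1) : Prop :=
  ~ algebraic A.

Definition weakly_algebraic (R : realType) (n : nat) (A : 'M[R]_n.+1) : Prop :=
  exists (l : nat) (P : ncpoly l.+1),
    (forall X : 'I_l.+1 -> 'M[R]_n.+1, X ord0 = A -> nceval X P = 0) /\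
    (exists C : 'I_l.+1 -> 'M[R]_n.+1, nceval C P != 0).

Definition pair_env (R : realType) (n : nat) (B C : 'M[R]_n.+1)
  : 'I_2 -> 'M[R]_n.+1 := fun i => if val i == 0%N then B else C.

Definition weakly_alg_indep (R : realType) (n : nat) (B C : 'M[R]_n.+1) : Prop :=
  forall P : ncpoly 2, nceval (pair_env B C) P = 0 ->
    forall C0 C1 : 'M[R]_n.+1, nceval (pair_env C0 C1) P = 0.

Definition supnorm (R : realType) (k : nat) (v : 'cV[R]_k) : R :=
  \big[Num.max/0]_(i < k) `|v i 0|.

Definition intvec (R : realType) (k : nat) (q : 'cV[int]_k) : 'cV[R]_k :=
  map_mx (fun z : int => (z%:~R : R)) q.

Definition liouville (R : realType) (m n : nat) (A : 'M[R]_(m, n)) : Prop :=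
  (forall (q : 'cV[int]_n) (p : 'cV[int]_m),
      ~~ ((q == 0) && (p == 0)) -> A *m intvec R q - intvec R p != 0) /\
  (forall N : nat, exists (p : 'cV[int]_m) (q : 'cV[int]_n),
      q != 0 /\
      supnorm (A *m intvec R q - intvec R p) < (supnorm (intvec R q)) ^- N).

From HB Require Import structures.
From mathcomp Require Import all_boot all_order all_algebra.
From mathcomp Require Import all_classical all_reals all_analysis.
Import Order.TTheory GRing.Theory Num.Theory.
Import numFieldNormedType.Exports.
Local Open Scope classical_set_scope.
Local Open Scope ring_scope.

Set Implicit Arguments.
Unset Strict Implicit.
Unset Printing Implicit Defensive.

(* (i) If p(A) = 0 for a nonzero integer polynomial p, then the noncommutative
   polynomial p(X + Y) vanishes at (B, C), hence by weak independence at
   (t I, 0) for every real t, so p has infinitely many real roots.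
   (ii) The matrices B such that B and A - B are Liouville and weakly
   algebraically independent form a countable intersection of open dense
   sets, which is nonempty by Baire's theorem.  For P not a polynomial
   identity, P(B, A - B) <> 0 holds on a dense set: a noncommutative
   polynomial vanishing on a ball vanishes on every line through its centre,
   hence everywhere, and then P(X_1, X_0 - X_1) would witness that A is weakly
   algebraic.  Liouville approximations are dense because matrices with
   rational entries are, and an integer relation is destroyed by perturbing a
   single entry. *)

Section NCPolyCountable.
Variable k : nat.

Fixpoint tree_of_ncpoly (P : ncpoly k) : GenTree.tree (int + 'I_k) :=
  match P with
  | NCconst c => GenTree.Leaf (inl c)
  | NCvar i => GenTree.Leaf (inr i)
  | NCopp p => GenTree.Node 0 [:: tree_of_ncpoly p]
  | NCadd p q => GenTree.Node 1 [:: tree_of_ncpoly p; tree_of_ncpoly q]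
  | NCmul p q => GenTree.Node 2 [:: tree_of_ncpoly p; tree_of_ncpoly q]
  end.

Fixpoint ncpoly_of_tree (t : GenTree.tree (int + 'I_k)) : option (ncpoly k) :=
  match t with
  | GenTree.Leaf (inl c) => Some (NCconst k c)
  | GenTree.Leaf (inr i) => Some (NCvar i)
  | GenTree.Node 0 [:: t1] => omap (@NCopp k) (ncpoly_of_tree t1)
  | GenTree.Node 1 [:: t1; t2] =>
      if ncpoly_of_tree t1 is Some p then omap (NCadd p) (ncpoly_of_tree t2)
      else None
  | GenTree.Node 2 [:: t1; t2] =>
      if ncpoly_of_tree t1 is Some p then omap (NCmul p) (ncpoly_of_tree t2)
      else None
  | _ => None
  end.

Lemma tree_of_ncpolyK : pcancel tree_of_ncpoly ncpoly_of_tree.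
Proof. by elim => //= [p ->|p -> q ->|p -> q ->]. Qed.

HB.instance Definition _ :=
  Countable.copy (ncpoly k) (pcan_type tree_of_ncpolyK).

End NCPolyCountable.

Fixpoint ncsubst {k l} (s : 'I_k -> ncpoly l) (P : ncpoly k) : ncpoly l :=
  match P with
  | NCconst c => NCconst l c
  | NCvar i => s i
  | NCopp p => NCopp (ncsubst s p)
  | NCadd p q => NCadd (ncsubst s p) (ncsubst s q)
  | NCmul p q => NCmul (ncsubst s p) (ncsubst s q)
  end.

(* Horner scheme; s lists the coefficients from the constant term up. *)
Fixpoint nchorner {k} (x : ncpoly k) (s : seq int) : ncpoly k :=
  if s is c :: s' then NCadd (NCconst k c) (NCmul x (nchorner x s'))
  else NCconst k 0.

Lemma poly_itv_eq0 (F : numFieldType) (p : {poly F}) (d : F) : 0 < d ->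
  (forall t, 0 < t < d -> p.[t] = 0) -> p = 0.
Proof.
move=> d_gt0 p_eq0; apply/eqP; apply: contraT => p_neq0.
pose roots := [seq d / i.+2%:R | i <- iota 0 (size p)].
have := max_poly_roots p_neq0 (rs := roots).
rewrite size_map size_iota ltnn; apply.
  apply/allP => _ /mapP [i _ ->]; apply/rootP/p_eq0.
  by rewrite divr_gt0 ?ltr0n //= ltr_pdivrMr ?ltr0n // ltr_pMr // ltr1n.
rewrite map_inj_uniq ?iota_uniq // => i j /(mulrI _).
rewrite unitfE gt_eqF // => /(_ isT) /invr_inj /eqP.
by rewrite eqr_nat => /eqP [].
Qed.

Section MatrixContinuity.
Variables (R : realType) (T : topologicalType).

Lemma continuous_mx m k (f : T -> 'M[R]_(m, k)) :
  (forall i j, continuous (fun x => f x i j)) -> continuous f.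
Proof.
move=> fc x A [P hP hA].
have : \forall y \near x, forall ij : 'I_m * 'I_k, P ij.1 ij.2 (f y ij.1 ij.2).
  by apply: filter_forall => -[i j]; exact: (fc i j x _ (hP i j)).
by apply: filterS => y hy; apply: hA => i j; exact: (hy (i, j)).
Qed.

Lemma continuous_mxE m k (f : T -> 'M[R]_(m, k)) i j :
  continuous f -> continuous (fun x => f x i j).
Proof.
by move=> fc x; exact: (continuous_comp (fc x) (@coord_continuous R m k i j _)).
Qed.

Lemma continuous_big (U : topologicalType) (op : U -> U -> U) (idx : U)
    (I : Type) (r : seq I) (P : pred I) (F : I -> T -> U) :
  (forall f g : T -> U, continuous f -> continuous g ->
     continuous (fun x => op (f x) (g x))) ->
  (forall i, continuous (F i)) ->
  continuous (fun x => \big[op/idx]_(i <- r | P i) F i x).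
Proof.
move=> opc Fc; elim: r => [|i r IH].
  by under eq_fun do rewrite big_nil; exact: cst_continuous.
under eq_fun do rewrite big_cons.
by case: (P i); [exact: opc | exact: IH].
Qed.

Lemma continuous_mulmx a b c (f : T -> 'M[R]_(a, b)) (g : T -> 'M[R]_(b, c)) :
  continuous f -> continuous g -> continuous (fun x => f x *m g x).
Proof.
move=> fc gc; apply: continuous_mx => i j; under eq_fun do rewrite mxE.
apply: continuous_big => [u v uc vc x|l x].
  exact: continuousD (uc x) (vc x).
by apply: continuousM; apply: continuous_mxE.
Qed.

Lemma continuous_supnorm k (f : T -> 'cV[R]_k) :
  continuous f -> continuous (fun x => supnorm (f x)).
Proof.
move=> fc; apply: continuous_big => [u v|i x]; first exact: max_fun_continuous.
by apply: continuous_comp; [exact: continuous_mxE | exact: norm_continuous].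
Qed.

Lemma open_neq0 m k (f : T -> 'M[R]_(m, k)) : continuous f ->
  open [set x | f x != 0].
Proof.
move=> fc; rewrite (_ : mkset _ = (fun x => `|f x|) @^-1` [set y | 0 < y]).
  apply: open_comp; last exact: open_gt.
  by move=> x _; apply: continuous_comp; [exact: fc | exact: norm_continuous].
by apply/seteqP; split => x /=; rewrite normr_gt0.
Qed.

End MatrixContinuity.

Lemma continuous_mulmxr_sub (R : realType) a b c (u : 'M[R]_(b, c))
    (v : 'M[R]_(a, c)) :
  continuous (fun B : 'M[R]_(a, b) => B *m u - v).
Proof.
move=> B; apply: (continuousD _ (@cst_continuous _ _ (- v) B)).
by apply: continuous_mulmx => C; [exact: cvg_id | exact: cst_continuous].
Qed.

Lemma countable_Baire (K : realType) (U : completeNormedModType K)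
    (T : countType) (S : T -> set U) :
  (forall i, open (S i)) -> (forall i, dense (S i)) ->
  exists x, forall i, S i x.
Proof.
move=> S_open S_dense.
pose F k := if pickle_inv k is Some i then S i else setT.
have F_od k : open (F k) /\ dense (F k).
  rewrite /F; case: pickle_inv => [i|]; first by split.
  by split => [|O [x Ox] _]; [exact: openT | exists x].
have [x [_ Fx]] := @Baire K U F F_od setT (ex_intro _ 0 I) openT.
by exists x => i; have := Fx (pickle i) I; rewrite /F pickleK_inv.
Qed.

Lemma open_dense_involutive (T : topologicalType) (f : T -> T) (S : set T) :
  continuous f -> involutive f -> open S -> dense S ->
  open (f @^-1` S) /\ dense (f @^-1` S).
Proof.
move=> fc fK So Sd; split; first by apply: open_comp => // x _; exact: fc.
move=> O [x Ox] Oo.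
have [y [Ofy Sy]] : f @^-1` O `&` S !=set0.
  apply: Sd; first by exists (f x); rewrite /= fK.
  by apply: open_comp => // z _; exact: fc.
by exists (f y); rewrite /= fK.
Qed.

Lemma ball_dense (K : numFieldType) (T : pseudoMetricType K) (S : set T) :
  (forall x (e : K), 0 < e -> exists2 y, ball x e y & S y) -> dense S.
Proof.
move=> hS O [x Ox] Oo.
have /nbhs_ballP [e e_gt0 xeO] : nbhs x O by apply: open_nbhs_nbhs.
by have [y xey Sy] := hS x e e_gt0; exists y; split => //; apply: xeO.
Qed.

Section SupNorm.
Variable R : realType.

Lemma ler_supnorm k (v : 'cV[R]_k) i : `|v i 0| <= supnorm v.
Proof. by rewrite /supnorm (bigD1 i) //= le_max lexx. Qed.

Lemma supnorm0 k : supnorm (0 : 'cV[R]_k) = 0.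
Proof.
rewrite /supnorm; elim/big_ind: _ => // [x y -> ->|i _]; first by rewrite maxxx.
by rewrite mxE normr0.
Qed.

Lemma intvec_eq0 k (q : 'cV[int]_k) : (intvec R q == 0) = (q == 0).
Proof.
apply/eqP/eqP => [/matrixP qR0|->]; apply/matrixP => i j; rewrite !mxE //.
by move: (qR0 i j); rewrite !mxE => /eqP; rewrite intr_eq0 => /eqP.
Qed.

Lemma supnorm_intvec_gt0 k (q : 'cV[int]_k) :
  q != 0 -> 0 < supnorm (intvec R q).
Proof.
move=> /matrix0Pn [i [j qij_neq0]]; apply: lt_le_trans (ler_supnorm _ i).
by rewrite normr_gt0 mxE -(ord1 j) intr_eq0.
Qed.

Lemma ball_mx_entrywise m k (X Y : 'M[R]_(m, k)) (e : R) :
  0 < e -> (forall i j, `|X i j - Y i j| < e) -> ball X e Y.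
Proof. by move=> e_gt0 h; split => // i j; rewrite /ball /= -ball_normE. Qed.

End SupNorm.

Section SquareMatrices.
Variables (R : realType) (n : nat).
Local Notation M := 'M[R]_n.+1.
Local Notation intcol := 'cV[int]_n.+1.

Lemma nceval_ext k (X Y : 'I_k -> M) P : X =1 Y -> nceval X P = nceval Y P.
Proof. by move=> XY; elim: P => //= [p->|p -> q ->|p -> q ->]. Qed.

Lemma nceval_subst k l (s : 'I_k -> ncpoly l) (X : 'I_l -> M) P :
  nceval X (ncsubst s P) = nceval (fun i => nceval X (s i)) P.
Proof. by elim: P => //= [p->|p -> q ->|p -> q ->]. Qed.

Lemma nceval_nchorner k (X : 'I_k -> M) x (p : {poly int}) :
  nceval X (nchorner x p) = zpoly_eval p (nceval X x).
Proof.
rewrite /zpoly_eval; elim: (polyseq p) => [|c s IH] /=.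
  by rewrite big_ord0 mulr0z raddf0.
rewrite big_ord_recl /= expr0 scalemx1 IH mulmx_sumr; congr (_ + _).
by apply: eq_bigr => i _; rewrite exprS -scalemxAr mulmxE.
Qed.

Lemma continuous_nceval k (P : ncpoly k) (T : topologicalType)
    (f : 'I_k -> T -> M) :
  (forall i, continuous (f i)) -> continuous (fun x => nceval (f^~ x) P).
Proof.
move=> fc; elim: P => /= [c|i|p IH|p IHp q IHq|p IHp q IHq].
- exact: cst_continuous.
- exact: fc.
- by move=> x; exact: continuousN (IH x).
- by move=> x; exact: continuousD (IHp x) (IHq x).
- exact: continuous_mulmx.
Qed.

Lemma continuous_subr (A : M) : continuous (fun B : M => A - B).
Proof.
move=> B; apply: continuousD; first exact: cst_continuous.
by apply: continuousN; exact: cvg_id.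
Qed.

Lemma scalar_mxX (t : R) k : (t%:M : M) ^+ k = (t ^+ k)%:M.
Proof.
elim: k => [|k IH]; first by rewrite !expr0.
by rewrite !exprS IH -mulmxE -scalar_mxM.
Qed.

Lemma zpoly_eval_scalar (p : {poly int}) (t : R) :
  zpoly_eval p (t%:M : M) = ((map_poly intr p).[t])%:M.
Proof.
rewrite /zpoly_eval (horner_coef_wide _ (size_poly _ _)) raddf_sum.
by apply: eq_bigr => i _; rewrite coef_map scalar_mxX scale_scalar_mx.
Qed.

Lemma transcendental_of_indep (B C : M) :
  weakly_alg_indep B C -> transcendental (B + C).
Proof.
move=> indep [p [p_neq0 pBC]].
pose Q : ncpoly 2 := nchorner (NCadd (NCvar ord0) (NCvar ord_max)) p.
have QE (B' C' : M) : nceval (pair_env B' C') Q = zpoly_eval p (B' + C').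
  by rewrite nceval_nchorner.
have p_root t : (map_poly intr p).[t] = 0 :> R.
  have /matrixP /(_ 0 0) := indep Q (etrans (QE B C) pBC) t%:M 0.
  by rewrite QE addr0 zpoly_eval_scalar !mxE eqxx mulr1n.
have lead_neq0 : (lead_coef p)%:~R != 0 :> R.
  by rewrite intr_eq0 lead_coef_eq0.
move/negP: p_neq0; apply; rewrite -(map_poly_eq0_id0 lead_neq0).
by apply/eqP/(poly_itv_eq0 ltr01) => t _; exact: p_root.
Qed.

Fixpoint ncline_poly {k} (U V : 'I_k -> M) (P : ncpoly k) : {poly M} :=
  match P with
  | NCconst c => ((c%:~R : R)%:M)%:P
  | NCvar i => (U i)%:P + (V i)%:P * 'X
  | NCopp p => - ncline_poly U V p
  | NCadd p q => ncline_poly U V p + ncline_poly U V q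
  | NCmul p q => ncline_poly U V p * ncline_poly U V q
  end.

Lemma horner_ncline_poly k (U V : 'I_k -> M) P (t : R) :
  (ncline_poly U V P).[t%:M] = nceval (fun i => U i + t *: V i) P.
Proof.
elim: P => /= [c|i|p IH|p IHp q IHq|p IHp q IHq].
- by rewrite hornerC.
- by rewrite hornerD hornerC hornerMX hornerC -mulmxE mul_mx_scalar.
- by rewrite hornerN IH.
- by rewrite hornerD IHp IHq.
(* Evaluation at t%:M is multiplicative because scalar matrices are central. *)
- rewrite hornerM_comm ?IHp ?IHq ?mulmxE //.
  by apply/esym/scalar_mxC.
Qed.

Lemma horner_scalar_mxE (q : {poly M}) (t : R) i j :
  q.[t%:M] i j = (\poly_(l < size q) q`_l i j).[t].
Proof.
rewrite horner_coef horner_poly summxE; apply: eq_bigr => l _.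
by rewrite scalar_mxX -mulmxE mul_mx_scalar mxE mulrC.
Qed.

Lemma nceval_line_eq0 k (P : ncpoly k) (U V : 'I_k -> M) (d : R) : 0 < d ->
  (forall t, 0 < t < d -> nceval (fun i => U i + t *: V i) P = 0) ->
  forall t, nceval (fun i => U i + t *: V i) P = 0.
Proof.
move=> d_gt0 line_eq0 t; rewrite -horner_ncline_poly.
apply/matrixP => i j; rewrite horner_scalar_mxE mxE.
suff -> : \poly_(l < size (ncline_poly U V P)) (ncline_poly U V P)`_l i j = 0.
  by rewrite horner0.
apply: (poly_itv_eq0 d_gt0) => s s_itv.
by rewrite -horner_scalar_mxE horner_ncline_poly line_eq0 // mxE.
Qed.

Definition nc_identity (P : ncpoly 2) :=
  forall C0 C1 : M, nceval (pair_env C0 C1) P = 0.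

Lemma weakly_algebraic_of_pair (A : M) (P : ncpoly 2) : ~ nc_identity P ->
  (forall B, nceval (pair_env B (A - B)) P = 0) -> weakly_algebraic A.
Proof.
move=> P_nonid P_eq0; have /existsNP [C0 /existsNP [C1 PC]] := P_nonid.
pose swap (i : 'I_2) : ncpoly 2 := if val i == 0%N then NCvar ord_max
  else NCadd (NCvar ord0) (NCopp (NCvar ord_max)).
exists 1%N, (ncsubst swap P); split.
  move=> X X0A; rewrite nceval_subst -(P_eq0 (X ord_max)).
  apply: nceval_ext => i; rewrite /pair_env /swap.
  by case: (val i == 0%N) => //=; rewrite X0A.
exists (pair_env (C0 + C1) C0); apply/eqP.
rewrite nceval_subst (@nceval_ext _ _ (pair_env C0 C1)) // => i.
rewrite /pair_env /swap; case: (val i == 0%N) => //=.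
by rewrite addrAC subrr add0r.
Qed.

Lemma pair_env_line (A B D : M) (t : R) i :
  pair_env B (A - B) i + t *: pair_env D (- D) i =
  pair_env (B + t *: D) (A - (B + t *: D)) i.
Proof.
by rewrite /pair_env; case: (val i == 0%N); rewrite // scalerN opprD addrA.
Qed.

Lemma nceval_pair_ball_eq0 (A B0 : M) (e : R) (P : ncpoly 2) : 0 < e ->
  (forall B, ball B0 e B -> nceval (pair_env B (A - B)) P = 0) ->
  forall B, nceval (pair_env B (A - B)) P = 0.
Proof.
move=> e_gt0 ball_eq0 B; pose D := B - B0.
have d_gt0 : 0 < e / (`|D| + 1) by rewrite divr_gt0 // ltr_wpDl.
have line_eq0 t : 0 < t < e / (`|D| + 1) ->
    nceval (fun i => pair_env B0 (A - B0) i + t *: pair_env D (- D) i) P = 0.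
  move=> /andP [t_gt0 t_lt]; rewrite (nceval_ext _ (pair_env_line A B0 D t)).
  apply: ball_eq0; rewrite -ball_normE /= opprD addrA subrr sub0r normrN.
  rewrite normrZ gtr0_norm //; apply: le_lt_trans (_ : t * (`|D| + 1) < e).
    by rewrite ler_pM2l // lerDl.
  by rewrite -ltr_pdivlMr // ltr_wpDl.
have := nceval_line_eq0 d_gt0 line_eq0 1.
by rewrite (nceval_ext _ (pair_env_line A B0 D 1)) scale1r /D addrC subrK.
Qed.

Definition indep_set (A : M) (P : ncpoly 2) : set M :=
  [set B | nceval (pair_env B (A - B)) P = 0 -> nc_identity P].

Lemma open_indep_set (A : M) P : open (indep_set A P).
Proof.
have [P_id|P_nonid] := pselect (nc_identity P).
  have -> : indep_set A P = setT by apply/seteqP; split => // B _ _.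
  exact: openT.
have -> : indep_set A P = [set B | nceval (pair_env B (A - B)) P != 0].
  apply/seteqP; split => B /=; first by move=> h; apply/eqP => /h/P_nonid.
  by move=> /eqP PB /PB.
apply: (open_neq0 (f := fun B => nceval (pair_env B (A - B)) P)).
apply: continuous_nceval => i; rewrite /pair_env; case: (val i == 0%N).
  by move=> x; exact: cvg_id.
exact: continuous_subr.
Qed.

Lemma dense_indep_set (A : M) P :
  ~ weakly_algebraic A -> dense (indep_set A P).
Proof.
move=> A_nonalg; apply: ball_dense => B0 e e_gt0.
have [P_id|P_nonid] := pselect (nc_identity P).
  by exists B0 => //; exact: ballxx.
apply: contra_notP A_nonalg => no_indep.
apply: (weakly_algebraic_of_pair P_nonid) (nceval_pair_ball_eq0 e_gt0 _).
move=> B B0eB; apply: contra_notP no_indep => PB.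
by exists B; [exact: B0eB | move=> /PB].
Qed.

Definition no_int_relation (qp : intcol * intcol) : set M :=
  [set B | ~~ ((qp.1 == 0) && (qp.2 == 0)) ->
           B *m intvec R qp.1 - intvec R qp.2 != 0].

Definition liouville_approx (N : nat) : set M :=
  [set B | exists p q : intcol, q != 0 /\
     supnorm (B *m intvec R q - intvec R p) < supnorm (intvec R q) ^- N].

Definition liouville_cond (i : (intcol * intcol) + nat) : set M :=
  match i with inl qp => no_int_relation qp | inr N => liouville_approx N end.

Lemma liouville_condP (B : M) : (forall i, liouville_cond i B) -> liouville B.
Proof.
by move=> h; split => [q p|N]; [exact: (h (inl (q, p))) | exact: (h (inr N))].
Qed.

Lemma open_no_int_relation qp : open (no_int_relation qp).
Proof.
case: qp => q p; have [qp0|qp_neq0] := boolP ((q == 0) && (p == 0)).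
  have -> : no_int_relation (q, p) = setT.
    by apply/seteqP; split => [//|B _]; rewrite /no_int_relation /= qp0.
  exact: openT.
have -> : no_int_relation (q, p) =
    [set B | B *m intvec R q - intvec R p != 0].
  by apply/seteqP; split => B /=; [apply | move=> ? _].
apply: (open_neq0 (f := fun B : M => B *m intvec R q - intvec R p)).
exact: continuous_mulmxr_sub.
Qed.

(* Adding e/2 to the entry (0, j) with q_j <> 0 moves B q by (e/2) q_j. *)
Lemma dense_no_int_relation qp : dense (no_int_relation qp).
Proof.
apply: ball_dense => B0 e e_gt0; case: qp => q p.
have [rel|no_rel] := eqVneq (B0 *m intvec R q - intvec R p) 0; last first.
  by exists B0 => //; exact: ballxx.
have [q0|/matrix0Pn [j [k]]] := eqVneq q 0.
  exists B0 => [|/=]; first exact: ballxx.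
  have intvec0 : intvec R (0 : intcol) = 0 by apply/eqP; rewrite intvec_eq0.
  move: rel; rewrite q0 intvec0 mulmx0 sub0r => /eqP.
  by rewrite oppr_eq0 intvec_eq0 => /eqP ->; rewrite /no_int_relation /= eqxx.
rewrite (ord1 k) => qj_neq0.
exists (B0 + (e / 2) *: delta_mx 0 j) => [|_ /=].
  apply: ball_mx_entrywise => // a b.
  rewrite !mxE opprD addrA subrr sub0r normrN normrM.
  rewrite ger0_norm ?divr_ge0 ?(ltW e_gt0) //.
  apply: (@le_lt_trans _ _ (e / 2)).
    rewrite ler_piMr ?divr_ge0 ?(ltW e_gt0) //.
    by case: (_ && _); rewrite ?normr1 ?normr0.
  by rewrite ltr_pdivrMr // ltr_pMr // ltr1n.
rewrite mulmxDl addrAC rel add0r -scalemxAl.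
apply/negP => /eqP/matrixP/(_ 0 0); rewrite !mxE => /eqP.
rewrite mulf_eq0 gt_eqF ?divr_gt0 //= (bigD1 j) //= big1 ?addr0.
  by rewrite !mxE !eqxx mul1r intr_eq0 (negbTE qj_neq0).
by move=> l /negbTE l_neq_j; rewrite !mxE l_neq_j andbF mul0r.
Qed.

Lemma open_liouville_approx N : open (liouville_approx N).
Proof.
rewrite openE => B [p [q [q_neq0 Bqp]]].
have near_B : nbhs B [set B' : M |
    supnorm (B' *m intvec R q - intvec R p) < supnorm (intvec R q) ^- N].
  apply: open_nbhs_nbhs; split => //.
  apply: (@open_comp _ _
    (fun B' : M => supnorm (B' *m intvec R q - intvec R p)) [set y | y < _]).
    by move=> B' _; apply: continuous_supnorm; exact: continuous_mulmxr_sub.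
  exact: open_lt.
by apply: filterS near_B => B' B'qp; exists p, q.
Qed.

(* Rounding every entry down to a multiple of 1/d, with 1/d < e, gives a
   matrix Y with Y (d e_0) = p for an integer column p. *)
Lemma dense_liouville_approx N : dense (liouville_approx N).
Proof.
apply: ball_dense => B0 e e_gt0.
pose d := (Num.trunc e^-1).+1.
have d_gt0 : (0 : R) < d%:R by rewrite ltr0n.
have inv_d_lt : d%:R^-1 < e.
  by have := truncnS_gt e^-1; rewrite -ltf_pV2 ?posrE ?invr_gt0 // invrK.
pose Y : M := \matrix_(i, j) ((Num.floor (d%:R * B0 i j))%:~R / d%:R).
pose q : intcol := \col_j (if j == 0 then d%:Z else 0).
pose p : intcol := \col_i Num.floor (d%:R * B0 i 0).
have q_neq0 : q != 0 by apply/eqP => /matrixP /(_ 0 0); rewrite !mxE eqxx.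
exists Y.
  apply: ball_mx_entrywise => // i j; rewrite mxE.
  set x := d%:R * B0 i j.
  have -> : B0 i j = x / d%:R by rewrite /x [d%:R * _]mulrC mulfK ?gt_eqF.
  rewrite -mulrBl normrM (gtr0_norm (_ : 0 < d%:R^-1)) ?invr_gt0 //.
  apply: le_lt_trans inv_d_lt; rewrite ler_piMl ?invr_ge0 ?(ltW d_gt0) //.
  have /andP [x_ge x_lt] := floor_itv x; rewrite intrD in x_lt.
  by rewrite ger0_norm ?subr_ge0 // lerBlDr addrC ltW.
exists p, q; split => //.
rewrite (_ : Y *m intvec R q - intvec R p = 0) ?supnorm0.
  by rewrite invr_gt0 exprn_gt0 // supnorm_intvec_gt0.
apply/matrixP => i k; rewrite (ord1 k) !mxE (bigD1 0) //= big1 ?addr0.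
  by rewrite !mxE eqxx pmulrn divfK ?gt_eqF // subrr.
by move=> j /negbTE j_neq0; rewrite !mxE j_neq0 mulr0.
Qed.

Lemma open_liouville_cond i : open (liouville_cond i).
Proof.
case: i => [qp|N]; first exact: open_no_int_relation.
exact: open_liouville_approx.
Qed.

Lemma dense_liouville_cond i : dense (liouville_cond i).
Proof.
case: i => [qp|N]; first exact: dense_no_int_relation.
exact: dense_liouville_approx.
Qed.

(* The complete normed structure of square matrices is only found on a
   rectangular alias. *)
Definition sqmx := 'M[R]_(n.+1, n.+1).
HB.instance Definition _ := NormedModule.on sqmx.
HB.instance Definition _ := Complete.on sqmx.

Lemma liouville_indep_split (A : M) : ~ weakly_algebraic A ->
  exists B C : M,
    [/\ weakly_alg_indep B C, liouville B, liouville C & B + C = A].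
Proof.
move=> A_nonalg; pose subA (B : M) := A - B.
have subAK : involutive subA by move=> B; rewrite /subA opprB addrC subrK.
have subA_od j := open_dense_involutive (@continuous_subr A) subAK
  (@open_liouville_cond j) (@dense_liouville_cond j).
pose S (i : ncpoly 2 + ((intcol * intcol + nat) + (intcol * intcol + nat))) :
    set sqmx :=
  match i with
  | inl P => indep_set A P
  | inr (inl j) => liouville_cond j
  | inr (inr j) => subA @^-1` liouville_cond j
  end.
have [||B SB] := @countable_Baire R sqmx _ S.
- case=> [P|[j|j]]; first exact: open_indep_set.
    exact: open_liouville_cond.
  exact: (subA_od j).1.
- case=> [P|[j|j]]; first exact: dense_indep_set.
    exact: dense_liouville_cond.
  exact: (subA_od j).2.
exists B, (A - B); split.
- by move=> P; exact: (SB (inl P)).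
- by apply: liouville_condP => j; exact: (SB (inr (inl j))).
- by apply: liouville_condP => j; exact: (SB (inr (inr j))).
- by rewrite addrC subrK.
Qed.

End SquareMatrices.

Theorem theorem7 (R : realType) (n : nat) (A : 'M[R]_n.+1) :
  (forall B C : 'M[R]_n.+1, A = B + C -> weakly_alg_indep B C ->
     transcendental A) /\
  (~ weakly_algebraic A ->
     exists B C : 'M[R]_n.+1,
       [/\ weakly_alg_indep B C, liouville B, liouville C & B + C = A]).
Proof.
split; first by move=> B C -> /transcendental_of_indep.
exact: liouville_indep_split.
Qed.
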